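(* Let $\mathfrak{l}$ be a finite-dimensional restricted Lie algebra over an algebraically closed field $\mathbb{K}$ of characteristic $p>0$, with $p$-map $a\mapsto a^{[p]}$, and let $\chi\in\mathfrak{l}^\ast$. On the vector space $\mathfrak{l}_\chi=\mathfrak{l}\oplus\mathbb{K}c$ define the Lie bracket $[a+\alpha c,b+\beta c]=[a,b]$ (so that $c$ is central and $\mathfrak{l}_\chi$ is the trivial central extension of $\mathfrak{l}$ as a Lie algebra) and the map $$(a+\alpha c)^{[p]}=a^{[p]}+(\chi(a)^p+\alpha^p)c\qquad(a\in\mathfrak{l},\ \alpha\in\mathbb{K}).$$ Then this defines a structure of restricted Lie algebra on $\mathfrak{l}_\chi$.
   Context: A restricted Lie algebra is a Lie algebra with a $p$-map satisfying Jacobson's axioms: $(\beta a)^{[p]}=\beta^p a^{[p]}$, $\operatorname{ad}(a^{[p]})=(\operatorname{ad}a)^p$, and $(a+b)^{[p]}=a^{[p]}+b^{[p]}+\sum_{i=1}^{p-1}s_i(a,b)$, where $i\,s_i(a,b)$ is the coefficient of $T^{i-1}$ in $(\operatorname{ad}(aT+b))^{p-1}(a)$. *)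

From HB Require Import structures.
From mathcomp Require Import all_boot all_order all_algebra.
Set Implicit Arguments. Unset Strict Implicit. Unset Printing Implicit Defensive.
Import GRing.Theory.
Local Open Scope ring_scope.

Definition is_lie_bracket (K : fieldType) (L : lmodType K) (br : L -> L -> L) : Prop :=
  [/\ (forall (k : K) (x y z : L), br (k *: x + y) z = k *: br x z + br y z),
      (forall (k : K) (x y z : L), br z (k *: x + y) = k *: br z x + br z y),
      (forall x : L, br x x = 0) &
      (forall x y z : L, br x (br y z) + br y (br z x) + br z (br x y) = 0)].

(* i * s_i(a,b) = coefficient of T^(i-1) in (ad(aT+b))^(p-1)(a).
   Since ad(aT+b) = T ad a + ad b, expanding the (p-1)-fold composition gives
   the sum, over all words w in {a,b}^(p-1) with exactly i-1 letters a, of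
   ad(w_1) o ... o ad(w_(p-1)) applied to a  (true = a, false = b). *)
Definition jacobson_coef (K : fieldType) (L : lmodType K) (br : L -> L -> L)
    (p : nat) (a b : L) (i : nat) : L :=
  \sum_(w : (p.-1).-tuple bool | count id w == i.-1)
     foldr (fun (x : bool) v => br (if x then a else b) v) a w.

(* s_i(a,b) itself (i is invertible in K for 1 <= i <= p-1, p = char K). *)
Definition jacobson_s (K : fieldType) (L : lmodType K) (br : L -> L -> L)
    (p : nat) (a b : L) (i : nat) : L :=
  (i%:R : K)^-1 *: jacobson_coef br p a b i.

Definition is_pmap (K : fieldType) (L : lmodType K) (br : L -> L -> L)
    (p : nat) (pm : L -> L) : Prop :=
  [/\ (forall (beta : K) (a : L), pm (beta *: a) = beta ^+ p *: pm a),
      (forall a b : L, br (pm a) b = iter p (br a) b) &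
      (forall a b : L, pm (a + b) =
          pm a + pm b + \sum_(1 <= i < p) jacobson_s br p a b i)].

Definition restricted_lie (K : fieldType) (L : lmodType K) (br : L -> L -> L)
    (p : nat) (pm : L -> L) : Prop :=
  is_lie_bracket br /\ is_pmap br p pm.

(* The extension l_chi = l (+) K c, realised as L * K with c = (0, 1). *)
Definition ext_br (K : fieldType) (L : lmodType K) (br : L -> L -> L)
    (x y : (L * K^o)%type) : (L * K^o)%type := (br x.1 y.1, 0).

Definition ext_pm (K : fieldType) (L : lmodType K) (pm : L -> L) (p : nat)
    (chi : L -> K) (x : (L * K^o)%type) : (L * K^o)%type :=
  (pm x.1, (chi x.1 ^+ p + (x.2 : K) ^+ p : K)).

From HB Require Import structures.
From mathcomp Require Import all_boot all_order all_algebra.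
Import GRing.Theory.
Local Open Scope ring_scope.

(* Every bracket of l_chi lies in l, and for p >= 2 Jacobson's s_i(a, b) are
   nonempty iterated brackets, so they are the s_i of the l-components with
   zero c-component.  Hence the axioms reduce to those of l, plus the
   p-semilinearity and additivity of (a, alpha) |-> chi(a)^p + alpha^p, which
   hold because chi is linear and Frobenius is additive in characteristic p. *)

Section TrivialCentralExtension.
Variables (K : fieldType) (L : lmodType K) (br : L -> L -> L).
Local Notation Lc := (L * K^o)%type.

Lemma fst_foldr_ext_br (a b : Lc) (w : seq bool) :
  (foldr (fun (x : bool) v => ext_br br (if x then a else b) v) a w).1
  = foldr (fun (x : bool) v => br (if x then a.1 else b.1) v) a.1 w.
Proof. by elim: w => [|x w /= <-] //; case: x. Qed.

Lemma jacobson_coef_ext_br (p : nat) (a b : Lc) (i : nat) : (1 < p)%N ->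
  jacobson_coef (ext_br br) p a b i = (jacobson_coef br p a.1 b.1 i, 0).
Proof.
move=> p_gt1; rewrite /jacobson_coef; apply: injective_projections => /=.
- rewrite (raddf_sum fst); apply: eq_bigr => w _; exact: fst_foldr_ext_br.
- rewrite (raddf_sum snd) big1 // => -[[|x w] /= size_w] _ //.
  by move: size_w p_gt1; case: p => [|[|n]].
Qed.

Lemma jacobson_s_ext_br (p : nat) (a b : Lc) (i : nat) : (1 < p)%N ->
  jacobson_s (ext_br br) p a b i = (jacobson_s br p a.1 b.1 i, 0).
Proof.
move=> p_gt1; rewrite /jacobson_s jacobson_coef_ext_br //.
by apply: injective_projections => //=; exact: scaler0.
Qed.

Lemma iter_ext_br (n : nat) (a b : Lc) :
  iter n.+1 (ext_br br a) b = (iter n.+1 (br a.1) b.1, 0).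
Proof. by elim: n => //= n ->. Qed.

Lemma is_lie_bracket_ext_br : is_lie_bracket br -> is_lie_bracket (ext_br br).
Proof.
case=> linl linr alt jacobi; split=> [k x y z|k x y z|x|x y z];
  apply: injective_projections => /=.
- exact: linl.
- by rewrite scaler0 addr0.
- exact: linr.
- by rewrite scaler0 addr0.
- exact: alt.
- by [].
- exact: jacobi.
- by rewrite !addr0.
Qed.

Lemma is_pmap_ext_pm (p : nat) (pm : L -> L) (chi : {linear L -> K^o}) :
  p \in [pchar K] -> is_pmap br p pm ->
  is_pmap (ext_br br) p (ext_pm pm p (fun a => chi a : K)).
Proof.
move=> pcharK [pmZ ad_pm pmD]; have p_gt1 := prime_gt1 (pcharf_prime pcharK).
split=> [beta a|a b|a b].
- rewrite /ext_pm /= pmZ linearZ; apply: injective_projections => //=.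
  by rewrite /GRing.scale /= mulrDr !exprMn.
- case: p p_gt1 {pcharK pmZ pmD} ad_pm => // n _ ad_pm.
  by rewrite iter_ext_br /ext_br ad_pm.
- under eq_bigr => i _ do rewrite jacobson_s_ext_br //.
  apply: injective_projections => /=.
  + by rewrite (raddf_sum fst) /= pmD.
  + rewrite (raddf_sum snd) big1 //= addr0 linearD.
    by rewrite -!(pFrobenius_autE pcharK) !rmorphD addrACA.
Qed.

End TrivialCentralExtension.

Theorem proposition1p2p3 (K : closedFieldType) (p : nat) (hp : p \in [pchar K])
    (L : vectType K) (br : L -> L -> L) (pm : L -> L)
    (hL : restricted_lie br p pm) (chi : {linear L -> K^o}) :
  @restricted_lie K (L * K^o)%type (ext_br br) p (ext_pm pm p (fun a => chi a : K)).
Proof.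
case: hL => lie pmap.
by split; [exact: is_lie_bracket_ext_br | exact: is_pmap_ext_pm].
Qed.
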